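(* Let $k\geq 3$ and $t\geq 1$ be integers and let $G$ be a group of order $2^k(2t-1)$. Then $G$ is regular if and only if $G\cong H\times A$, where $A$ is an abelian group of order $2t-1$ and $H$ is a regular $2$-group of order $2^k$.
   Context: For a finite group $G$, $C_G(x)$ denotes the centralizer of $x\in G$. The non-centralizer graph $\Upsilon_G$ is the simple graph with vertex set $G$ in which two distinct vertices $x,y$ are adjacent if and only if $C_G(x)\neq C_G(y)$. A finite group $G$ is called regular if $\Upsilon_G$ is a regular graph (all vertices have the same degree). *)

From mathcomp Require Import all_boot all_fingroup all_solvable.
Set Implicit Arguments. Unset Strict Implicit. Unset Printing Implicit Defensive.
Local Open Scope group_scope.

(* Non-centralizer graph of a finite group G (vertex set G): distinct x, y
   are adjacent iff 'C_G[x] <> 'C_G[y]. *)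
Definition ncadj (gT : finGroupType) (G : {set gT}) (x y : gT) : bool :=
  (x != y) && ('C_G[x] != 'C_G[y]).

Definition ncdeg (gT : finGroupType) (G : {set gT}) (x : gT) : nat :=
  #|[set y in G | ncadj G x y]|.

Definition nc_regular (gT : finGroupType) (G : {set gT}) : Prop :=
  forall x y, x \in G -> y \in G -> ncdeg G x = ncdeg G y.

From mathcomp Require Import all_boot all_fingroup all_solvable.

(* The degree of x in the non-centralizer graph is |G| minus the size of the
   set of elements sharing the centralizer of x.  That set always contains the
   coset xZ(G), and it is exactly Z(G) for x = 1; so G is regular iff
   C_G(x) = C_G(y) forces xZ(G) = yZ(G).  As x and x^-1 have the same
   centralizer, all squares are then central: G/Z(G) has exponent 2, G is
   nilpotent and G = O_2(G) x O_2'(G).  An element of odd order is a power of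
   its square, so O_2'(G) is central, and the centralizer condition passes
   between G and O_2(G) across a direct product with an abelian factor. *)

Set Implicit Arguments. Unset Strict Implicit. Unset Printing Implicit Defensive.
Local Open Scope group_scope.

Section Cent1Classes.
Variable gT : finGroupType.
Implicit Types (G K L : {group gT}) (x y z : gT).

Definition cent1_class G x := [set y in G | 'C_G[y] == 'C_G[x]].

Definition cent1_inj_modZ G :=
  {in G &, forall x y, 'C_G[x] = 'C_G[y] -> x^-1 * y \in 'Z(G)}.

Lemma ncadjE G x y : ncadj G x y = ('C_G[y] != 'C_G[x]).
Proof.
by rewrite /ncadj [_ == 'C_G[x]]eq_sym; case: eqVneq => [->|]; rewrite ?eqxx.
Qed.

Lemma ncdegE G x : ncdeg G x = #|G| - #|cent1_class G x|.
Proof.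
rewrite /ncdeg (_ : [set y in G | _] = G :\: cent1_class G x).
  by rewrite cardsD (setIidPr _) //; apply/subsetP=> y /setIdP[].
by apply/setP=> y; rewrite !inE ncadjE; case: (y \in G); rewrite ?andbT.
Qed.

Lemma subcent1_mulZ G x z : z \in 'Z(G) -> 'C_G[x * z] = 'C_G[x].
Proof.
move=> Zz; apply/setP=> y; rewrite !in_setI; case Gy: (y \in G) => //=.
have cyz : z \in 'C[y] by move/centerP: Zz => [_ /(_ y Gy)/cent1P].
by rewrite cent1C [y \in _]cent1C groupMr.
Qed.

Lemma subcent1V G x : 'C_G[x^-1] = 'C_G[x].
Proof.
by apply/setP=> y; rewrite !in_setI [y \in 'C[_]]cent1C [y \in 'C[_]]cent1C groupV.
Qed.

Lemma cent1_class1 G : cent1_class G 1 = 'Z(G).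
Proof.
apply/setP=> y; rewrite inE cent11T setIT eqEsubset subsetIl /=.
by rewrite subsetIidl sub_cent1 -in_setI.
Qed.

Lemma lcosetZ_sub_cent1_class G x : x \in G -> x *: 'Z(G) \subset cent1_class G x.
Proof.
move=> Gx; apply/subsetP=> _ /lcosetP[z Zz ->].
by rewrite inE subcent1_mulZ // eqxx groupM // (subsetP (center_sub G)).
Qed.

Lemma cent1_class_lcosetZ G x :
  cent1_inj_modZ G -> x \in G -> cent1_class G x = x *: 'Z(G).
Proof.
move=> injC Gx; apply/eqP; rewrite eqEsubset lcosetZ_sub_cent1_class // andbT.
by apply/subsetP=> y /setIdP[Gy /eqP cGxy]; rewrite mem_lcoset injC.
Qed.

Lemma nc_regularP G : nc_regular G <-> cent1_inj_modZ G.
Proof.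
split=> [regG x y Gx Gy cGxy | injC x y Gx Gy]; last first.
  by rewrite !ncdegE !cent1_class_lcosetZ // !card_lcoset.
have card_class : #|cent1_class G x| = #|'Z(G)|.
  have := regG x 1 Gx (group1 G); rewrite !ncdegE cent1_class1.
  have le_class : #|cent1_class G x| <= #|G|.
    by apply/subset_leq_card/subsetP=> u /setIdP[].
  by move/(congr1 (subn #|G|)); rewrite !subKn // subset_leq_card ?center_sub.
have /eqP class_x : x *: 'Z(G) == cent1_class G x.
  by rewrite eqEcard lcosetZ_sub_cent1_class // card_lcoset card_class /=.
have : y \in cent1_class G x by rewrite inE Gy cGxy eqxx.
by rewrite -class_x mem_lcoset.
Qed.

Lemma subcent1_mul_central G K L a :
  K * L = G -> L \subset 'Z(G) -> a \in G -> 'C_G[a] = 'C_K[a] * L.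
Proof.
move=> defG sLZ Ga; have cLa : L \subset 'C[a].
  by rewrite sub_cent1 (subsetP _ a Ga) // -centsC (subset_trans sLZ) ?subsetIr.
by rewrite [K :&: _]setIC group_modr // defG setIC.
Qed.

Lemma dprod_cent1_inj_modZ G K L :
  K \x L = G -> abelian L -> cent1_inj_modZ G <-> cent1_inj_modZ K.
Proof.
move=> dG cLL; have [_ defG _ _] := dprodP dG.
have [_ defZ _ _] := dprodP (center_dprod dG); rewrite (center_idP cLL) in defZ.
have sLZ : L \subset 'Z(G) by rewrite -defZ mulG_subr.
have sZKZ : 'Z(K) \subset 'Z(G) by rewrite -defZ mulG_subl.
have sKG : K \subset G by rewrite -defG mulG_subl.
have subcent1K a : 'C_K[a] = K :&: 'C_G[a] by rewrite setIA (setIidPl sKG).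
split=> injC a b; last move=> Ga Gb.
  move=> Ka Kb; have [Ga Gb] := (subsetP sKG a Ka, subsetP sKG b Kb).
  rewrite !subcent1K => /(congr1 (fun C => C * L)).
  rewrite -!subcent1K -!(subcent1_mul_central defG) // => /(injC a b Ga Gb).
  case/setIP=> _ cGab; rewrite inE groupM ?groupV //.
  exact: subsetP (centS sKG) _ cGab.
rewrite -defG in Ga Gb.
case/mulsgP: Ga Gb => a1 l1 Ka1 Ll1 -> /mulsgP[b1 l2 Kb1 Ll2 ->].
have [Zl1 Zl2] := (subsetP sLZ l1 Ll1, subsetP sLZ l2 Ll2).
rewrite !subcent1_mulZ // => eqC.
have Zab : a1^-1 * b1 \in 'Z(G).
  by apply: (subsetP sZKZ); apply: injC; rewrite // !subcent1K eqC.
have ->: (a1 * l1)^-1 * (b1 * l2) = l1^-1 * (a1^-1 * b1) * l2 by rewrite invMg !mulgA.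
by rewrite groupMr // groupMl // groupV.
Qed.

Lemma expg2_center G x : cent1_inj_modZ G -> x \in G -> x ^+ 2 \in 'Z(G).
Proof.
move=> injC Gx; have := injC _ _ (groupVr Gx) Gx (subcent1V G x).
by rewrite invgK expgS expg1.
Qed.

End Cent1Classes.

Lemma isog_cent1_inj_modZ (gT hT : finGroupType) (G : {group gT})
    (M : {group hT}) :
  G \isog M -> cent1_inj_modZ M -> cent1_inj_modZ G.
Proof.
rewrite isog_sym => /isogP[f injf fM] injC x y.
rewrite -fM => /morphimP[a _ Ma ->] /morphimP[b _ Mb ->].
rewrite -!injm_subcent1 // => /(injm_morphim_inj injf) eqC.
have Zab := injC a b Ma Mb (eqC (subsetIl _ _) (subsetIl _ _)).
rewrite -morphV // -morphM ?groupV // -injm_center //.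
by rewrite mem_morphim // groupM ?groupV.
Qed.

Lemma mem_odd_order_expg2 (gT : finGroupType) (H : {group gT}) (x : gT) :
  odd #[x] -> x ^+ 2 \in H -> x \in H.
Proof.
move=> odd_x x2H; rewrite -cycle_subG.
have /eqP-> : generator <[x]> (x ^+ 2) by rewrite generator_coprime coprimen2.
by rewrite cycle_subG.
Qed.

Lemma nilpotent_expg_center (gT : finGroupType) (G : {group gT}) p :
  prime p -> {in G, forall x, x ^+ p \in 'Z(G)} -> nilpotent G.
Proof.
move=> p_pr Zxp; rewrite -quotient_center_nil; apply: (@pgroup_nil _ p).
rewrite -pnat_exponent (pnat_dvd _ (pnat_id p_pr)) //.
apply/exponentP=> _ /morphimP[x Nx Gx ->].
by rewrite -morphX //; apply: coset_id; apply: Zxp.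
Qed.

Lemma card_pcores_nilpotent (gT : finGroupType) (G : {group gT}) pi n m :
  nilpotent G -> #|G| = (n * m)%N -> pi.-nat n -> pi^'.-nat m ->
  #|'O_pi(G)| = n /\ #|'O_pi^'(G)| = m.
Proof.
move=> nilG oG pi_n pi'_m.
have /andP[n_gt0 m_gt0] : (0 < n) && (0 < m) by rewrite -muln_gt0 -oG.
rewrite !(card_Hall (nilpotent_pcore_Hall _ nilG)) oG !partnM //.
rewrite part_pnat_id // part_p'nat // part_p'nat ?pnatNK //.
by rewrite part_pnat_id // muln1 mul1n.
Qed.

Lemma pcore2'_sub_center (gT : finGroupType) (G : {group gT}) :
  cent1_inj_modZ G -> 'O_2^'(G) \subset 'Z(G).
Proof.
move=> injC; apply/subsetP=> a Aa; have Ga := subsetP (pcore_sub _ _) a Aa.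
apply: mem_odd_order_expg2 (expg2_center injC Ga).
by rewrite odd_2'nat; apply: mem_p_elt (pcore_pgroup _ _) Aa.
Qed.

Local Close Scope group_scope.

Theorem theorem2p13 (gT : finGroupType) (G : {group gT}) (k t : nat) :
  3 <= k -> 1 <= t -> #|G| = 2 ^ k * (2 * t - 1) ->
  (nc_regular G <->
   exists (hT aT : finGroupType) (H : {group hT}) (A : {group aT}),
     [/\ [/\ pgroup 2 H, #|H| = 2 ^ k & nc_regular H],
         abelian A, #|A| = 2 * t - 1 &
         G \isog setX H A]).
Proof.
move=> _ t_gt0 oG; split=> [/nc_regularP injC | ]; last first.
  case=> hT [aT [H [A [[_ _ /nc_regularP injCH] cAA _ isoG]]]].
  apply/nc_regularP/(isog_cent1_inj_modZ isoG).
  apply/(dprod_cent1_inj_modZ (setX_dprod H A)).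
    by rewrite -(isog_abelian (@isog_set1X hT aT A)).
  exact: isog_cent1_inj_modZ (isog_symr (@isog_setX1 hT aT H)) injCH.
have nilG : nilpotent G.
  exact: (nilpotent_expg_center (p := 2)) (fun x => expg2_center injC).
have dG := nilpotent_pcoreC 2 nilG.
have cOO : abelian 'O_2^'(G).
  exact: abelianS (pcore2'_sub_center injC) (center_abelian G).
have odd_t : 2^'.-nat (2 * t - 1) by rewrite -odd_2'nat oddB ?muln_gt0 // oddM.
have pow2_k : 2.-nat (2 ^ k) by rewrite pnatX pnat_id.
have [oH oA] := card_pcores_nilpotent nilG oG pow2_k odd_t.
exists gT, gT, 'O_2(G)%G, 'O_2^'(G)%G; split=> //.
  split=> //; first exact: pcore_pgroup.
  exact/nc_regularP/(dprod_cent1_inj_modZ dG cOO).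
exact: isog_dprod dG (setX_dprod _ _) (@isog_setX1 gT gT _) (@isog_set1X gT gT _).
Qed.
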